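(* $\mathfrak{F}\models_{\mathbf{K}\mathsf{G}^2}\phi$ iff for any model $\mathfrak{M}$ on $\mathfrak{F}$ and any $w\in\mathfrak{F}$, $v_1(\phi,w)=1$.
   Context: The language $\mathsf{bi}\mathcal{L}^\neg_{\Box,\lozenge}$ is given by $\phi ::= p\mid\neg\phi\mid\phi\wedge\phi\mid\phi\vee\phi\mid\phi\rightarrow\phi\mid\phi\ominus\phi\mid\Box\phi\mid\lozenge\phi$, where $\ominus$ denotes the Gödel coimplication. On $[0,1]$: $a\wedge_\mathsf{G}b=\min(a,b)$, $a\vee_\mathsf{G}b=\max(a,b)$, $a\rightarrow_\mathsf{G}b=1$ if $a\le b$ and $b$ otherwise, $b\ominus_\mathsf{G}a=0$ if $b\le a$ and $b$ otherwise. A $\mathbf{K}\mathsf{G}^2$ model is $\mathfrak{M}=\langle W,R,v_1,v_2\rangle$ with $\langle W,R\rangle$ a crisp frame ($R\subseteq W\times W$) and $v_1,v_2:\mathsf{Var}\times W\to[0,1]$, extended by: $v_1(\neg\phi)=v_2(\phi)$, $v_2(\neg\phi)=v_1(\phi)$; $v_1(\phi\wedge\psi)=v_1(\phi)\wedge_\mathsf{G}v_1(\psi)$, $v_2(\phi\wedge\psi)=v_2(\phi)\vee_\mathsf{G}v_2(\psi)$; $v_1(\phi\vee\psi)=v_1(\phi)\vee_\mathsf{G}v_1(\psi)$, $v_2(\phi\vee\psi)=v_2(\phi)\wedge_\mathsf{G}v_2(\psi)$; $v_1(\phi\rightarrow\psi)=v_1(\phi)\rightarrow_\mathsf{G}v_1(\psi)$,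 $v_2(\phi\rightarrow\psi)=v_2(\psi)\ominus_\mathsf{G}v_2(\phi)$; $v_1(\phi\ominus\psi)=v_1(\phi)\ominus_\mathsf{G}v_1(\psi)$, $v_2(\phi\ominus\psi)=v_2(\psi)\rightarrow_\mathsf{G}v_2(\phi)$ (all at the same state $w$); $v_1(\Box\phi,w)=\inf\{v_1(\phi,w'):wRw'\}$, $v_2(\Box\phi,w)=\sup\{v_2(\phi,w'):wRw'\}$, $v_1(\lozenge\phi,w)=\sup\{v_1(\phi,w'):wRw'\}$, $v_2(\lozenge\phi,w)=\inf\{v_2(\phi,w'):wRw'\}$, with $\inf\varnothing=1$, $\sup\varnothing=0$. $\phi$ is $\mathbf{K}\mathsf{G}^2$ valid on a crisp frame $\mathfrak{F}$ ($\mathfrak{F}\models_{\mathbf{K}\mathsf{G}^2}\phi$) iff $v_1(\phi,w)=1$ and $v_2(\phi,w)=0$ for every $w\in\mathfrak{F}$ and every model on $\mathfrak{F}$. *)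

From HB Require Import structures.
From mathcomp Require Import all_boot all_order all_algebra.
From mathcomp Require Import boolp classical_sets reals Rstruct.
Set Implicit Arguments. Unset Strict Implicit. Unset Printing Implicit Defensive.
Import Order.TTheory GRing.Theory Num.Theory.
Local Open Scope ring_scope.
Local Open Scope classical_set_scope.

Notation RR := Rdefinitions.R.

Inductive fml : Type :=
| Var   : nat -> fml
| Neg   : fml -> fml
| And   : fml -> fml -> fml
| Or    : fml -> fml -> fml
| Imp   : fml -> fml -> fml
| Coimp : fml -> fml -> fml
| Box   : fml -> fml
| Dia   : fml -> fml.

Definition gmin (a b : RR) : RR := Num.min a b.
Definition gmax (a b : RR) : RR := Num.max a b.
Definition gimp (a b : RR) : RR := if a <= b then 1 else b.
Definition gcoimp (b a : RR) : RR := if b <= a then 0 else b.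

Definition Sup (E : set RR) : RR := if E == set0 then 0 else sup E.
Definition Inf (E : set RR) : RR := if E == set0 then 1 else inf E.

Record frame := Frame { fW : Type ; fR : fW -> fW -> Prop }.

Record model (F : frame) := Model {
  v1v : nat -> fW F -> RR ;
  v2v : nat -> fW F -> RR ;
  v1v_range : forall p w, 0 <= v1v p w <= 1 ;
  v2v_range : forall p w, 0 <= v2v p w <= 1 }.

Fixpoint ev (F : frame) (M : model F) (phi : fml) (w : fW F) : RR * RR :=
  match phi with
  | Var p => (v1v M p w, v2v M p w)
  | Neg a => ((ev M a w).2, (ev M a w).1)
  | And a b => (gmin (ev M a w).1 (ev M b w).1, gmax (ev M a w).2 (ev M b w).2)
  | Or a b => (gmax (ev M a w).1 (ev M b w).1, gmin (ev M a w).2 (ev M b w).2)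
  | Imp a b => (gimp (ev M a w).1 (ev M b w).1, gcoimp (ev M b w).2 (ev M a w).2)
  | Coimp a b => (gcoimp (ev M a w).1 (ev M b w).1, gimp (ev M b w).2 (ev M a w).2)
  | Box a => (Inf [set (ev M a w').1 | w' in [set w' | fR w w']],
              Sup [set (ev M a w').2 | w' in [set w' | fR w w']])
  | Dia a => (Sup [set (ev M a w').1 | w' in [set w' | fR w w']],
              Inf [set (ev M a w').2 | w' in [set w' | fR w w']])
  end.

Definition v1 (F : frame) (M : model F) phi w : RR := (ev M phi w).1.
Definition v2 (F : frame) (M : model F) phi w : RR := (ev M phi w).2.

Definition KG2_valid (F : frame) (phi : fml) : Prop :=
  forall (M : model F) (w : fW F), v1 M phi w = 1 /\ v2 M phi w = 0.

(* The map (v1, v2) |-> (1 - v2, 1 - v1) sends KG^2 models on a frame to KG^2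
   models on the same frame, and by induction on formulas the first valuation
   of the new model is 1 - v2 everywhere: on the propositional connectives
   because x |-> 1 - x swaps min and max and turns ->_G into the dual of (-)_G,
   on the modalities because it swaps sup and inf.  Hence if v1(phi) = 1 in
   every model, then 1 - v2(phi) = 1 in every model, i.e. v2(phi) = 0. *)
From mathcomp Require Import all_boot all_order all_algebra.
From mathcomp Require Import boolp classical_sets reals Rstruct.
From mathcomp Require Import lra.
Set Implicit Arguments. Unset Strict Implicit. Unset Printing Implicit Defensive.
Import Order.TTheory GRing.Theory Num.Theory.
Local Open Scope ring_scope.
Local Open Scope classical_set_scope.

Lemma Inf_compl (E : set RR) :
  has_ubound E -> Inf [set 1 - x | x in E] = 1 - Sup E.
Proof.
move=> ubE; rewrite /Inf /Sup.
have [->|/set0P[a Ea]] := eqVneq E set0; first by rewrite image_set0 eqxx subr0.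
rewrite ifN; last by apply/set0P; exists (1 - a), a.
have lbE1 : has_lbound [set 1 - x | x in E].
  by case: ubE => u ubu; exists (1 - u) => _ [x /ubu Exu <-]; lra.
apply: le_anti; apply/andP; split.
- suff : sup E <= 1 - inf [set 1 - x | x in E] by lra.
  apply: ge_sup; first by exists a.
  move=> x Ex; have : inf [set 1 - x | x in E] <= 1 - x.
    by apply: ge_inf => //; exists x.
  lra.
- apply: lb_le_inf; first by exists (1 - a), a.
  move=> _ [x Ex <-]; have : x <= sup E by exact: ub_le_sup ubE x Ex.
  lra.
Qed.

Lemma Sup_compl (E : set RR) :
  has_lbound E -> Sup [set 1 - x | x in E] = 1 - Inf E.
Proof.
move=> lbE; rewrite /Inf /Sup.
have [->|/set0P[a Ea]] := eqVneq E set0; first by rewrite image_set0 eqxx subrr.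
rewrite ifN; last by apply/set0P; exists (1 - a), a.
have ubE1 : has_ubound [set 1 - x | x in E].
  by case: lbE => l lbl; exists (1 - l) => _ [x /lbl Elx <-]; lra.
apply: le_anti; apply/andP; split.
- apply: ge_sup; first by exists (1 - a), a.
  move=> _ [x Ex <-]; have : inf E <= x by exact: ge_inf lbE x Ex.
  lra.
- suff : 1 - sup [set 1 - x | x in E] <= inf E by lra.
  apply: lb_le_inf; first by exists a.
  move=> x Ex; have : 1 - x <= sup [set 1 - x | x in E].
    by apply: ub_le_sup => //; exists x.
  lra.
Qed.

Section UnitInterval.
Variable E : set RR.
Hypothesis E01 : forall x, E x -> 0 <= x <= 1.

Lemma has_lbound01 : has_lbound E.
Proof. by exists 0 => x /E01 /andP[]. Qed.

Lemma has_ubound01 : has_ubound E.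
Proof. by exists 1 => x /E01 /andP[]. Qed.

Lemma Sup01 : 0 <= Sup E <= 1.
Proof.
rewrite /Sup; have [_|/set0P[a Ea]] := eqVneq E set0; first by rewrite lexx ler01.
have /andP[a0 _] := E01 Ea.
rewrite (le_trans a0) ?ub_le_sup //=; last exact: has_ubound01.
by apply: ge_sup; [exists a | move=> x /E01 /andP[]].
Qed.

Lemma Inf01 : 0 <= Inf E <= 1.
Proof.
rewrite /Inf; have [_|/set0P[a Ea]] := eqVneq E set0; first by rewrite lexx ler01.
have /andP[_ a1] := E01 Ea.
rewrite (le_trans _ a1) ?ge_inf ?andbT //; last exact: has_lbound01.
by apply: lb_le_inf; [exists a | move=> x /E01 /andP[]].
Qed.

End UnitInterval.

Lemma ev01 (F : frame) (M : model F) phi w :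
  0 <= (ev M phi w).1 <= 1 /\ 0 <= (ev M phi w).2 <= 1.
Proof.
elim: phi w => [p|a IHa|a IHa b IHb|a IHa b IHb|a IHa b IHb|a IHa b IHb|a IHa|a IHa] w /=.
3-6: have [/andP[? ?] /andP[? ?]] := IHa w; have [/andP[? ?] /andP[? ?]] := IHb w;
  rewrite /gmin /gmax /gimp /gcoimp ?minEle ?maxEle;
  by do !case: ifP => _; split; apply/andP; split; lra.
- by rewrite v1v_range v2v_range.
- by case: (IHa w).
- by split; [apply: Inf01 | apply: Sup01] => _ [w' _ <-]; case: (IHa w').
- by split; [apply: Sup01 | apply: Inf01] => _ [w' _ <-]; case: (IHa w').
Qed.

Lemma gmin_compl (x y : RR) : gmin (1 - x) (1 - y) = 1 - gmax x y.
Proof. by rewrite /gmin /gmax minEle maxEle; do 2 case: ifP => ?; lra. Qed.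

Lemma gmax_compl (x y : RR) : gmax (1 - x) (1 - y) = 1 - gmin x y.
Proof. by rewrite /gmin /gmax minEle maxEle; do 2 case: ifP => ?; lra. Qed.

Lemma gimp_compl (x y : RR) : gimp (1 - x) (1 - y) = 1 - gcoimp y x.
Proof. by rewrite /gimp /gcoimp; do 2 case: ifP => ?; lra. Qed.

Lemma gcoimp_compl (x y : RR) : gcoimp (1 - x) (1 - y) = 1 - gimp y x.
Proof. by rewrite /gimp /gcoimp; do 2 case: ifP => ?; lra. Qed.

Lemma compl01 (x : RR) : 0 <= x <= 1 -> 0 <= 1 - x <= 1.
Proof. by move=> /andP[? ?]; apply/andP; split; lra. Qed.

Section DualModel.
Variables (F : frame) (M : model F).

Definition dual_model : model F :=
  Model (fun p w => compl01 (v2v_range M p w)) (fun p w => compl01 (v1v_range M p w)).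

Lemma ev_dual_model phi w :
  ev dual_model phi w = (1 - (ev M phi w).2, 1 - (ev M phi w).1).
Proof.
elim: phi w => [p|a IHa|a IHa b IHb|a IHa b IHb|a IHa b IHb|a IHa b IHb|a IHa|a IHa] w /=.
- by [].
- by rewrite IHa.
- by rewrite IHa IHb /= gmin_compl gmax_compl.
- by rewrite IHa IHb /= gmin_compl gmax_compl.
- by rewrite IHa IHb /= gimp_compl gcoimp_compl.
- by rewrite IHa IHb /= gimp_compl gcoimp_compl.
all: rewrite (eq_imagel (fun w' _ => congr1 fst (IHa w'))).
all: rewrite (eq_imagel (fun w' _ => congr1 snd (IHa w'))) /=.
all: rewrite -(image_comp (fun w' => (ev M a w').1) (fun x => 1 - x)).
all: rewrite -(image_comp (fun w' => (ev M a w').2) (fun x => 1 - x)).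
all: rewrite Inf_compl ?Sup_compl //.
all: (apply: has_ubound01 || apply: has_lbound01) => _ [w' _ <-].
all: by case: (ev01 M a w').
Qed.

End DualModel.

Theorem proposition1 (F : frame) (phi : fml) :
  KG2_valid F phi <-> (forall (M : model F) (w : fW F), v1 M phi w = 1).
Proof.
split=> [valid M w | v1_valid M w]; first by case: (valid M w).
split; first exact: v1_valid.
have := v1_valid (dual_model M) w.
by rewrite /v1 /v2 ev_dual_model /=; lra.
Qed.
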